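(* For positive integers $k<n$, $$\theta_k(\ell_\infty,\ell_\infty)\le \binom{n}{k}(k+1)^{\frac{k-1}{2}},$$ i.e. every $B\in\mathbb{C}^{n\times n}$ whose columns all have $\ell_\infty$ norm $1$ satisfies $\|C_k(B)\|_\infty\le\binom nk (k+1)^{(k-1)/2}$.
   Context: $C_k(B)$ is the $k$th compound of $B$: the $\binom nk\times\binom nk$ matrix of all $k\times k$ minors $\det B(\alpha|\beta)$, indexed by $k$-subsets $\alpha,\beta$ of $\{1,\ldots,n\}$. For vectors $\|\cdot\|_\infty$ is the max-modulus norm; for matrices it is the induced operator norm (maximum absolute row sum). $\theta_k(\mu,\nu)=\max\{\mu(C_k(B)): B\in\mathbb{C}^{n\times n},\ \nu(\mathrm{col}_i(B))=1\ \forall i\}$, where $\mathrm{col}_i(B)$ is the $i$th column. *)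

From HB Require Import structures.
From mathcomp Require Import all_boot all_order all_algebra.
From mathcomp Require Import complex.
From mathcomp Require Import reals.
Set Implicit Arguments. Unset Strict Implicit. Unset Printing Implicit Defensive.
Import Order.TTheory GRing.Theory Num.Theory.
Local Open Scope ring_scope.

(* The i-th (0-based) element of A in increasing order, if it exists:
   the unique x in A with exactly i elements of A below it. *)
Definition kth_elt n (A : {set 'I_n}) (i : nat) : option 'I_n :=
  [pick x in A | #|[set y in A | (y < x)%N]| == i].

(* The k x k submatrix B(alpha|beta), rows alpha and columns beta in increasing order
   (meaningful when #|alpha| = #|beta| = k). *)
Definition submx_sets (T : Type) (z : T) n k (B : 'M[T]_n) (a b : {set 'I_n}) : 'M[T]_k :=
  \matrix_(i < k, j < k)
     match kth_elt a i, kth_elt b j with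
     | Some r, Some c => B r c
     | _, _ => z
     end.

Definition minor (R : comNzRingType) n k (B : 'M[R]_n) (a b : {set 'I_n}) : R :=
  \det (submx_sets 0 k B a b).

(* ||C_k(B)||_infty: maximum absolute row sum of the k-th compound matrix,
   rows/columns indexed by k-subsets of {0,..,n-1}. *)
Definition compound_inf_norm (R : rcfType) n k (B : 'M[R[i]]_n) : R :=
  \big[Num.max/0]_(a : {set 'I_n} | #|a| == k)
     \sum_(b : {set 'I_n} | #|b| == k) ComplexField.Normc.normc (minor k B a b).

Definition col_inf_norm (R : rcfType) n (B : 'M[R[i]]_n) (j : 'I_n) : R :=
  \big[Num.max/0]_(i < n) ComplexField.Normc.normc (B i j).

(* Fix the row of C_k(B) indexed by a k-set a.  Every k-set b is c :\ x for
   exactly n - k pairs (c, x) with #|c| = k + 1 and x \in c, so (n - k) times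
   the row sum is the sum over the (k + 1)-sets c of
   \sum_(x in c) |det B(a | c :\ x)|.  These are the moduli of the maximal
   minors of the k x (k + 1) matrix B(a | c); bordering it with a row of
   unimodular phases turns their sum into one (k + 1) x (k + 1) determinant with
   entries of modulus at most 1, which Hadamard's inequality bounds by
   (k + 1)^((k + 1)/2).  Finally 'C(n, k + 1) (k + 1) = 'C(n, k) (n - k). *)

From HB Require Import structures.
From mathcomp Require Import all_boot all_order all_algebra.
From mathcomp Require Import perm sesquilinear spectral.
From mathcomp Require Import complex.
From mathcomp Require Import reals.

Set Implicit Arguments.
Unset Strict Implicit.
Unset Printing Implicit Defensive.

Import Order.TTheory GRing.Theory Num.Theory.
Local Open Scope ring_scope.
Local Open Scope sesquilinear_scope.

Section Hadamard.
Variable C : numClosedFieldType.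

Local Notation "''[' u , v ]" := (dotmx u v) : ring_scope.
Local Notation "''[' u ]" := (dotmx u u) : ring_scope.

Lemma trmxC_mul m n p (A : 'M[C]_(m, n)) (B : 'M[C]_(n, p)) :
  (A *m B)^t* = B^t* *m A^t*.
Proof. by rewrite trmx_mul map_mxM. Qed.

Lemma dotmx_sumE m (v : 'rV[C]_m) : '[v] = \sum_j `|v 0 j| ^+ 2.
Proof. by rewrite dotmxE mxE; apply: eq_bigr => j _; rewrite !mxE normCK. Qed.

Lemma det_gram_col_mx_eq0 p m (r : 'rV[C]_m) (A : 'M[C]_(p, m)) :
  \det (A *m A^t*) = 0 -> \det (col_mx r A *m (col_mx r A)^t*) = 0.
Proof.
move/eqP/det0P => [v v_neq0 vG0].
have vA0 : v *m A = 0.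
  apply/eqP; rewrite -(dnorm_eq0 (@dotmx C m)) /= dotmxE trmxC_mul mulmxA.
  by rewrite -(mulmxA v) vG0 mul0mx mxE.
apply/eqP/det0P; exists (row_mx 0 v).
  by rewrite row_mx_eq0 eqxx (negPf v_neq0).
by rewrite mulmxA mul_row_col mul0mx add0r vA0 mul0mx.
Qed.

(* Subtracting from [r] its projection onto the row space of [A] is a
   unimodular row operation that makes the Gram matrix block diagonal. *)
Lemma det_gram_col_mx p m (r : 'rV[C]_m) (A : 'M[C]_(p, m)) :
  \det (A *m A^t*) != 0 ->
  exists2 r' : 'rV_m, '[r'] <= '[r] &
    \det (col_mx r A *m (col_mx r A)^t*) = '[r'] * \det (A *m A^t*).
Proof.
move=> detG_neq0; have G_unit : A *m A^t* \in unitmx by rewrite unitmxE unitfE.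
pose c := r *m A^t* *m invmx (A *m A^t*).
pose r' := r - c *m A.
have r'A : r' *m A^t* = 0 by rewrite mulmxBl -mulmxA mulmxKV // subrr.
have Ar' : A *m r'^t* = 0.
  by rewrite -[A]trmxCK -trmxC_mul r'A trmx0 map_mx0.
have r_eq : r = r' + c *m A by rewrite subrK.
clearbody r'.
exists r'.
  have r'cA : '[r', c *m A] = 0.
    by rewrite dotmxE trmxC_mul mulmxA r'A mul0mx mxE.
  by rewrite r_eq dnormD /= r'cA conjC0 !addr0 lerDl dnorm_ge0.
pose E : 'M_(1 + p) := block_mx 1%:M c 0 1%:M.
have detE : \det E = 1 by rewrite det_ublock !det1 mulr1.
have rA_eq : col_mx r A = E *m col_mx r' A.
  by rewrite mul_block_col !mul1mx mul0mx add0r -r_eq.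
rewrite rA_eq trmxC_mul !mulmxA det_mulmx -mulmxA det_mulmx detE mul1r.
rewrite det_map_mx det_tr detE rmorph1 mulr1 tr_col_mx map_row_mx.
by rewrite mul_col_row r'A Ar' det_ublock det_mx11 -dotmxE.
Qed.

Lemma hadamard_gram p m (A : 'M[C]_(p, m)) :
  0 <= \det (A *m A^t*) <= \prod_i '[row i A].
Proof.
have dot_ge0 := dnorm_ge0 (@dotmx C m).
elim: p A => [|p IH] A; first by rewrite det_mx00 big_ord0 lexx ler01.
rewrite -[A](@vsubmxK _ 1 p) (@big_split_ord _ _ _ 1 p) big_ord1.
rewrite (@rowKu _ 1 p) row_id.
under eq_bigr => i _ do rewrite (@rowKd _ 1 p).
move: (usubmx _) (dsubmx _) => r {}A; have /andP[G_ge0 G_le] := IH A.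
have [/(det_gram_col_mx_eq0 r) -> | /(det_gram_col_mx r) [r' r'_le ->]] :=
  eqVneq (\det (A *m A^t*)) 0.
  by rewrite lexx mulr_ge0 ?dot_ge0 ?(le_trans G_ge0 G_le).
by rewrite mulr_ge0 ?dot_ge0 //= ler_pM ?dot_ge0.
Qed.

Lemma hadamard_bound m (M : 'M[C]_m) :
  (forall i j, `|M i j| <= 1) -> `|\det M| ^+ 2 <= m%:R ^+ m.
Proof.
move=> M_le1; have /andP[_ gram_le] := hadamard_gram M.
have -> : `|\det M| ^+ 2 = \det (M *m M^t*).
  by rewrite det_mulmx det_map_mx det_tr normCK.
apply: le_trans gram_le _.
rewrite -[in X in _ <= _ ^+ X](card_ord m) -prodr_const.
apply: ler_prod => i _; rewrite (dnorm_ge0 (@dotmx C m)) dotmx_sumE /=.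
rewrite -[X in _ <= X%:R](card_ord m) -sumr_const.
by apply: ler_sum => j _; rewrite mxE exprn_ile1.
Qed.

End Hadamard.

Section MaximalMinors.
Variable C : numClosedFieldType.

Lemma mul_conj_phase (x : C) : x^* / `|x| * x = `|x|.
Proof.
have [->|x_neq0] := eqVneq x 0; first by rewrite normr0 mulr0.
by rewrite mulrAC -normCKC expr2 mulfK // normr_eq0.
Qed.

Lemma norm_conj_phase_le1 (x : C) : `|x^* / `|x| | <= 1.
Proof.
have [->|x_neq0] := eqVneq x 0; first by rewrite conjC0 mul0r normr0 ler01.
by rewrite normrM normfV norm_conjC normr_id divff ?normr_eq0.
Qed.

Lemma sum_norm_det_col'_bound k (A : 'M[C]_(k, k.+1)) :
  (forall i j, `|A i j| <= 1) ->
  (\sum_j `|\det (col' j A)|) ^+ 2 <= (k.+1)%:R ^+ k.+1.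
Proof.
move=> A_le1.
pose s (j : 'I_k.+1) : C := (-1) ^+ j * \det (col' j A).
pose M : 'M[C]_k.+1 := \matrix_(i, j)
  if unlift ord0 i is Some i' then A i' j else (s j)^* / `|s j|.
have M_le1 i j : `|M i j| <= 1.
  rewrite mxE; case: unlift => [i'|]; first exact: A_le1.
  exact: norm_conj_phase_le1.
have detM : \det M = \sum_j `|\det (col' j A)|.
  rewrite (expand_det_row M ord0); apply: eq_bigr => j _.
  have -> : cofactor M ord0 j = s j.
    rewrite /cofactor add0n; congr (_ * \det _).
    by apply/matrixP => i l; rewrite !mxE liftK.
  rewrite mxE unlift_none mul_conj_phase /s normrM normrX normrN1.
  by rewrite expr1n mul1r.
have := hadamard_bound M_le1.
by rewrite detM ger0_norm // sumr_ge0.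
Qed.

End MaximalMinors.

Definition enumerates (T : finType) k (f : 'I_k -> T) (A : {set T}) :=
  injective f /\ f @: setT = A.

Section Enumerations.
Variable T : finType.

Lemma enumerates_card k (f : 'I_k -> T) A : enumerates f A -> #|A| = k.
Proof. by move=> [f_inj <-]; rewrite card_imset // cardsT card_ord. Qed.

Lemma enumerates_setD1 k (f : 'I_k.+1 -> T) A j :
  enumerates f A -> enumerates (f \o lift j) (A :\ f j).
Proof.
move=> enum_A; have card_A := enumerates_card enum_A.
case: enum_A => f_inj f_img.
have fl_inj : injective (f \o lift j) := inj_comp f_inj (@lift_inj _ j).
have fjA : f j \in A by rewrite -f_img imset_f.
split=> //; apply/eqP; rewrite eqEcard card_imset // cardsT card_ord.
have := cardsD1 (f j) A; rewrite fjA card_A add1n => -[<-]; rewrite leqnn andbT.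
apply/subsetP => _ /imsetP[l _ ->].
by rewrite !inE /= (inj_eq f_inj) eq_sym neq_lift -f_img imset_f.
Qed.

Lemma enumerates_perm k (f g : 'I_k -> T) A :
  enumerates f A -> enumerates g A -> exists s : 'S_k, g =1 f \o s.
Proof.
move=> [f_inj f_img] [g_inj g_img].
have pre j : exists i, f i == g j.
  have : g j \in f @: setT by rewrite f_img -g_img imset_f.
  by case/imsetP => i _ ->; exists i.
pose s j := xchoose (pre j).
have sE j : f (s j) = g j := eqP (xchooseP (pre j)).
have s_inj : injective s by move=> j1 j2 /(congr1 f); rewrite !sE => /g_inj.
by exists (perm s_inj) => j; rewrite /= permE sE.
Qed.

End Enumerations.

Section KthElement.
Variable n : nat.
Implicit Types A : {set 'I_n}.

Definition rank_in A (x : 'I_n) := #|[set y in A | (y < x)%N]|.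

Lemma kth_eltP A i x : kth_elt A i = Some x -> x \in A /\ rank_in A x = i.
Proof. by rewrite /kth_elt; case: pickP => // y /andP[yA /eqP <-] [<-]. Qed.

Lemma rank_in_ltn A x y :
  x \in A -> y \in A -> (x < y)%N -> (rank_in A x < rank_in A y)%N.
Proof.
move=> xA yA xy; apply: proper_card; apply/properP; split.
  by apply/subsetP => z; rewrite !inE => /andP[-> /ltn_trans->].
by exists x; rewrite !inE ?xA ?xy ?ltnn.
Qed.

Lemma rank_in_inj A : {in A &, injective (rank_in A)}.
Proof.
move=> x y xA yA rxy; case: (ltngtP x y) => [xy|yx|/val_inj //].
  by have := rank_in_ltn xA yA xy; rewrite rxy ltnn.
by have := rank_in_ltn yA xA yx; rewrite rxy ltnn.
Qed.

Lemma rank_in_ltn_card A x : x \in A -> (rank_in A x < #|A|)%N.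
Proof.
move=> xA; apply: proper_card; apply/properP; split.
  by apply/subsetP => z; rewrite !inE => /andP[].
by exists x; rewrite // !inE ltnn andbF.
Qed.

(* [rank_in A] maps [A] injectively into [0, #|A|), hence onto it. *)
Lemma kth_elt_exists A i : (i < #|A|)%N -> exists x, kth_elt A i = Some x.
Proof.
move=> i_lt; suff [x xA rank_x] : exists2 x, x \in A & rank_in A x = i.
  rewrite /kth_elt; case: pickP => [y _|/(_ x)]; first by exists y.
  by rewrite xA -/(rank_in A x) rank_x eqxx.
move: i_lt; case card_A : #|A| => [//|m] i_lt.
have rank_lt x : x \in A -> (rank_in A x < m.+1)%N.
  by rewrite -card_A; exact: rank_in_ltn_card.
pose g x : 'I_m.+1 := inord (rank_in A x).
have g_inj : {in A &, injective g}.
  move=> x y xA yA /(congr1 val); rewrite /= !inordK ?rank_lt //.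
  exact: rank_in_inj.
have g_onto : g @: A = setT.
  apply/eqP; rewrite eqEcard subsetT cardsT card_ord.
  by rewrite (card_in_imset g_inj) card_A leqnn.
have : (inord i : 'I_m.+1) \in g @: A by rewrite g_onto inE.
case/imsetP => x xA /(congr1 val); rewrite /= !inordK ?rank_lt // => ->.
by exists x.
Qed.

Lemma kth_elt_enumerates k A : #|A| = k ->
  exists2 f : 'I_k -> 'I_n,
    enumerates f A & forall j : 'I_k, kth_elt A j = Some (f j).
Proof.
move=> card_A.
have /fin_all_exists[f f_kth] : forall j : 'I_k, exists x, kth_elt A j = Some x.
  by move=> j; apply: kth_elt_exists; rewrite card_A.
have f_in j : f j \in A by have [] := kth_eltP (f_kth j).
have f_rank j : rank_in A (f j) = j by have [] := kth_eltP (f_kth j).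
have f_inj : injective f.
  by move=> i j fij; apply: val_inj; rewrite /= -(f_rank i) fij f_rank.
exists f => //; split=> //; apply/eqP.
rewrite eqEcard card_imset // cardsT card_ord card_A leqnn andbT.
by apply/subsetP => _ /imsetP[j _ ->].
Qed.

End KthElement.

Lemma norm_det_reindex (R : numDomainType) (T : finType) k (F : T -> T -> R)
    (f1 g1 f2 g2 : 'I_k -> T) (A1 A2 : {set T}) :
  enumerates f1 A1 -> enumerates g1 A1 ->
  enumerates f2 A2 -> enumerates g2 A2 ->
  `|\det (\matrix_(i, j) F (g1 i) (g2 j))| =
  `|\det (\matrix_(i, j) F (f1 i) (f2 j))|.
Proof.
move=> f1A g1A f2A g2A.
have [s1 g1E] := enumerates_perm f1A g1A.
have [s2 g2E] := enumerates_perm f2A g2A.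
have -> : \matrix_(i, j) F (g1 i) (g2 j) =
          row_perm s1 (col_perm s2 (\matrix_(i, j) F (f1 i) (f2 j))).
  by apply/matrixP => i j; rewrite !mxE g1E g2E.
rewrite row_permE col_permE !det_mulmx !det_perm !normrM !normrX normrN1.
by rewrite !expr1n mul1r mulr1.
Qed.

Lemma norm_minorE (R : numDomainType) n k (B : 'M[R]_n) (a b : {set 'I_n})
    (fa fb : 'I_k -> 'I_n) :
  enumerates fa a -> enumerates fb b ->
  `|minor k B a b| = `|\det (\matrix_(i, j) B (fa i) (fb j))|.
Proof.
move=> fa_a fb_b.
have [ga ga_a ga_kth] := kth_elt_enumerates (enumerates_card fa_a).
have [gb gb_b gb_kth] := kth_elt_enumerates (enumerates_card fb_b).
rewrite /minor; have -> : submx_sets 0 k B a b = \matrix_(i, j) B (ga i) (gb j).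
  by apply/matrixP => i j; rewrite !mxE ga_kth gb_kth.
exact (norm_det_reindex B fa_a ga_a fb_b gb_b).
Qed.

Lemma sum_norm_minors_setD1_bound (C : numClosedFieldType) n k (B : 'M[C]_n)
    (a c : {set 'I_n}) :
  #|a| = k -> #|c| = k.+1 -> (forall i j, `|B i j| <= 1) ->
  (\sum_(x in c) `|minor k B a (c :\ x)|) ^+ 2 <= (k.+1)%:R ^+ k.+1.
Proof.
move=> card_a card_c B_le1.
have [fa fa_a _] := kth_elt_enumerates card_a.
have [h h_c _] := kth_elt_enumerates card_c; have [h_inj h_img] := h_c.
pose A := \matrix_(i < k, l < k.+1) B (fa i) (h l).
have minorE j : `|minor k B a (c :\ h j)| = `|\det (col' j A)|.
  rewrite (norm_minorE B fa_a (enumerates_setD1 j h_c)).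
  by congr `|\det _|; apply/matrixP => i l; rewrite !mxE.
rewrite -{1}h_img big_imset /=; last by move=> ? ? _ _; exact: h_inj.
under eq_bigr => j _ do rewrite minorE.
rewrite (eq_bigl xpredT) => [|j]; last by rewrite inE.
by apply: sum_norm_det_col'_bound => i l; rewrite mxE.
Qed.

Lemma sum_setD1_card_eqS (T : finType) (V : nmodType) k (F : {set T} -> V) :
  \sum_(c : {set T} | #|c| == k.+1) \sum_(x in c) F (c :\ x) =
  (\sum_(b : {set T} | #|b| == k) F b) *+ (#|T| - k).
Proof.
rewrite -sumrMnl.
transitivity (\sum_(b : {set T} | #|b| == k) \sum_(x in ~: b) F b).
  rewrite (exchange_big_dep xpredT) //= [RHS](exchange_big_dep xpredT) //=.
  apply: eq_bigr => x _.
  rewrite (reindex_onto (fun b => x |: b) (fun c => c :\ x)) /=; last first.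
    by move=> c /andP[_ xc]; rewrite setD1K.
  apply: eq_big => [b|b]; last by move=> /andP[_ /eqP ->].
  rewrite setU11 inE andbT; have [xb|xb] := boolP (x \in b).
    rewrite andbF; apply/negbTE/negP => /andP[_ /eqP b_eq].
    by move: xb; rewrite -b_eq setD11.
  by rewrite setU1K // cardsU1 xb eqxx andbT.
apply: eq_bigr => b /eqP card_b; rewrite sumr_const.
by rewrite -(cardsC b) card_b addKn.
Qed.

Local Notation normc := ComplexField.Normc.normc.

Lemma norm_normc (R : rcfType) (z : R[i]) : `|z| = (normc z)%:C%C.
Proof. by case: z. Qed.

Lemma normc_ge0 (R : rcfType) (z : R[i]) : 0 <= normc z.
Proof. by rewrite -ler0c -norm_normc. Qed.

Lemma sum_normc_minors_setD1_bound (R : rcfType) n k (B : 'M[R[i]]_n)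
    (a c : {set 'I_n}) :
  #|a| = k -> #|c| = k.+1 -> (forall i j, `|B i j| <= 1) ->
  \sum_(x in c) normc (minor k B a (c :\ x)) <= Num.sqrt ((k.+1)%:R ^+ k.+1).
Proof.
move=> card_a card_c B_le1; set S := \sum_(x in c) _.
have S_ge0 : 0 <= S by apply: sumr_ge0 => x _; exact: normc_ge0.
rewrite -(ger0_norm S_ge0) -sqrtr_sqr ler_wsqrtr //.
rewrite -lecR rmorphXn rmorph_sum /=.
under eq_bigr do rewrite -norm_normc.
by rewrite rmorphXn rmorph_nat; exact: sum_norm_minors_setD1_bound.
Qed.

Theorem theorem2p7 (R : realType) (n k : nat) (hk0 : (0 < k)%N) (hkn : (k < n)%N)
    (B : 'M[R[i]]_n) (hB : forall j : 'I_n, col_inf_norm B j = 1) :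
  compound_inf_norm k B <= ('C(n, k))%:R * Num.sqrt ((k.+1)%:R ^+ (k.-1) : R).
Proof.
have B_le1 i j : `|B i j| <= 1.
  rewrite norm_normc lecR -(hB j).
  exact: (le_bigmax _ (fun i => normc (B i j))).
have sqrt_split : Num.sqrt ((k.+1)%:R ^+ k.+1 : R) =
                  (k.+1)%:R * Num.sqrt ((k.+1)%:R ^+ k.-1).
  have -> : (k.+1)%:R ^+ k.+1 = (k.+1)%:R ^+ 2 * (k.+1)%:R ^+ k.-1 :> R.
    by rewrite -exprD add2n prednK.
  by rewrite sqrtrM ?exprn_ge0 // sqrtr_sqr ger0_norm.
apply: bigmax_le => [|a /eqP card_a]; first by rewrite mulr_ge0 ?sqrtr_ge0.
rewrite -(@ler_pM2l _ (n - k)%:R) ?ltr0n ?subn_gt0 // mulr_natl.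
have := sum_setD1_card_eqS k (fun b => normc (minor k B a b)).
rewrite card_ord => <-.
apply: le_trans (ler_sum _ (fun c c_k =>
  sum_normc_minors_setD1_bound card_a (eqP c_k) B_le1)) _.
rewrite (eq_bigl (fun c => c \in [set c : {set 'I_n} | #|c| == k.+1])).
  2: by move=> c; rewrite inE.
rewrite sumr_const card_draws card_ord sqrt_split -mulrnAl -mulrnA mul_bin_left.
by rewrite natrM -mulrA.
Qed.
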